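(* Let $\mathcal{E}$ be the 2D Laplace equation $u_{xx}+u_{yy}=0$, with cotangent equation $\{u_{xx}+u_{yy}=0,\ p_{xx}+p_{yy}=0\}$. Then each of the following is a variational bivector on $\mathcal{E}$: $B_0=p$, $B_1=p_{yy}$, $B_2=p_{xy}$, $B_3=p_y+2(xp_{xy}+yp_{yy})$, $B_4=p_x+2(yp_{xy}-xp_{yy})$, $B_5=u_{yy}p_y-u_{xy}p_x+2(u_yp_{yy}-u_xp_{xy})$, $B_6=u_{yy}p_x+u_{xy}p_y+2(u_yp_{xy}+u_xp_{yy})$, $B_7=(u_y+xu_{xy}+yu_{yy})p_x+(u_x+yu_{xy}-xu_{yy})p_y+2(yu_x-xu_y)p_{yy}+2(xu_x+yu_y)p_{xy}$, $B_8=-(u_x+yu_{xy}-xu_{yy})p_x+(u_y+xu_{xy}+yu_{yy})p_y+2(xu_x+yu_y)p_{yy}-2(yu_x-xu_y)p_{xy}$.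
   Context: Setting: a scalar PDE $\mathcal{E}=\{F=0\}$ for one unknown $u(x^1,\dots,x^n)$, regarded as a submanifold of the infinite jet space with coordinates $x^i$, $u_\sigma$ ($\sigma$ a multi-index). $D_i$ are total derivatives, $D_\sigma$ their compositions. A $\mathcal{C}$-differential operator is an operator of the form $\sum_\sigma a^\sigma D_\sigma$ with smooth coefficients on the jet space (or on $\mathcal{E}$). The linearization is $\ell_F=\sum_\sigma \frac{\partial F}{\partial u_\sigma}D_\sigma$ and $\ell_{\mathcal{E}}$ its restriction to $\mathcal{E}$; $\Delta^*$ denotes the formal adjoint ($(\sum a^\sigma D_\sigma)^*=\sum(-1)^{|\sigma|}D_\sigma\circ a^\sigma$). The cotangent equation $\mathcal{T}^*\mathcal{E}$ is the system $\{F=0,\ \ell_F(p)=0\}$ (with all differential consequences), where $p$ is a new unknown of odd parity, so that all $p_\sigma$ are odd (anticommuting). Variational bivector: a $\mathcal{C}$-differential operator $H=\sum_\sigma h^\sigma D_\sigma$ on $\mathcal{E}$ such that (i) $\ell_{\mathcal{E}}(H_u)=0$ on $\mathcal{T}^*\mathcal{E}$, where $H_u=H(p)=\sum_\sigma h^\sigma p_\sigma$; and (ii) $H^*\circ\ell_{\mathcal{E}}^*=\ell_{\mathcal{E}}\circ H$ as operators on $\mathcal{E}$. Bivectors are identified with their functions $H_u$ (so ''$B=\sum B_\sigma p_\sigma$'' means $B=\sum B_\sigma D_\sigma$). *)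

From Stdlib Require Import Reals List.
Import ListNotations.
Open Scope R_scope.

(* Jet space of one unknown u(x,y) (n = 2 independent variables),     *)
(* extended by the (odd) cotangent variables p.                        *)
(* Coordinates: x, y, u_(i,j) = d^{i+j}u/dx^i dy^j, p_(i,j) likewise.   *)
(* Differential functions are polynomial expressions in these.        *)
Inductive expr : Type :=
| EC  : R -> expr
| EX  : expr
| EY  : expr
| EU  : nat -> nat -> expr
| EP  : nat -> nat -> expr
| EAdd : expr -> expr -> expr
| EMul : expr -> expr -> expr.

Record jetpt : Type := Jet {
  jx : R; jy : R;
  ju : nat -> nat -> R;
  jp : nat -> nat -> R }.

Fixpoint eval (t : jetpt) (e : expr) : R :=
  match e with
  | EC c => c
  | EX => jx t
  | EY => jy t
  | EU i j => ju t i j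
  | EP i j => jp t i j
  | EAdd a b => eval t a + eval t b
  | EMul a b => eval t a * eval t b
  end.

(* Total derivatives D_x (d = true) and D_y (d = false). *)
Fixpoint Dt (d : bool) (e : expr) : expr :=
  match e with
  | EC _ => EC 0
  | EX => EC (if d then 1 else 0)
  | EY => EC (if d then 0 else 1)
  | EU i j => if d then EU (S i) j else EU i (S j)
  | EP i j => if d then EP (S i) j else EP i (S j)
  | EAdd a b => EAdd (Dt d a) (Dt d b)
  | EMul a b => EAdd (EMul (Dt d a) b) (EMul a (Dt d b))
  end.

Definition Dsig (i j : nat) (e : expr) : expr :=
  Nat.iter i (Dt true) (Nat.iter j (Dt false) e).

Fixpoint dU (i j : nat) (e : expr) : expr :=
  match e with
  | EU k l => EC (if andb (Nat.eqb k i) (Nat.eqb l j) then 1 else 0)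
  | EAdd a b => EAdd (dU i j a) (dU i j b)
  | EMul a b => EAdd (EMul (dU i j a) b) (EMul a (dU i j b))
  | _ => EC 0
  end.

Fixpoint uord (e : expr) : nat :=
  match e with
  | EU i j => i + j
  | EAdd a b | EMul a b => Nat.max (uord a) (uord b)
  | _ => 0
  end.

Fixpoint p_free (e : expr) : Prop :=
  match e with
  | EP _ _ => False
  | EAdd a b | EMul a b => p_free a /\ p_free b
  | _ => True
  end.

(* A C-differential operator  sum_sigma a^sigma D_sigma, given as a     *)
(* finite list of (sigma, a^sigma).                                     *)
Definition cdo := list ((nat * nat) * expr).

Definition esum (l : list expr) : expr := fold_right EAdd (EC 0) l.

Definition apply_op (A : cdo) (f : expr) : expr :=
  esum (map (fun c => EMul (snd c) (Dsig (fst (fst c)) (snd (fst c)) f)) A).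

Definition apply_adj (A : cdo) (f : expr) : expr :=
  esum (map (fun c =>
         let '((i, j), a) := c in
         EMul (EC ((-1) ^ (i + j))) (Dsig i j (EMul a f))) A).

(* Linearization l_F = sum_sigma (dF/du_sigma) D_sigma (all sigma with  *)
(* |sigma| <= order of F; the other partial derivatives vanish).       *)
Definition lin (F : expr) : cdo :=
  let N := uord F in
  flat_map (fun i => map (fun j => ((i, j), dU i j F)) (seq 0 (S N))) (seq 0 (S N)).

(* Points of E = {F = 0} (with all differential consequences); the     *)
(* p-coordinates are unconstrained.                                    *)
Definition on_E (F : expr) (t : jetpt) : Prop :=
  forall i j, eval t (Dsig i j F) = 0.

Definition on_TE (F : expr) (t : jetpt) : Prop :=
  on_E F t /\ forall i j, eval t (Dsig i j (apply_op (lin F) (EP 0 0))) = 0.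

Definition Hu (H : cdo) : expr := apply_op H (EP 0 0).

(* Variational bivector on E = {F = 0}:
   (i)  l_E(H_u) = 0 on T^*E;
   (ii) H^* o l_E^* = l_E o H as operators on E (tested on all
        (polynomial) functions f on E, i.e. p-free f, at all points of E). *)
Definition variational_bivector (F : expr) (H : cdo) : Prop :=
  (forall t, on_TE F t -> eval t (apply_op (lin F) (Hu H)) = 0) /\
  (forall f, p_free f -> forall t, on_E F t ->
      eval t (apply_adj H (apply_adj (lin F) f)) =
      eval t (apply_op (lin F) (apply_op H f))).

Definition laplace : expr := EAdd (EU 2 0) (EU 0 2).

Definition u_x := EU 1 0.
Definition u_y := EU 0 1.
Definition u_xy := EU 1 1.
Definition u_yy := EU 0 2.
Definition eadd3 a b c := EAdd a (EAdd b c).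
Definition eneg a := EMul (EC (-1)) a.
Definition esc (c : R) a := EMul (EC c) a.

(* index (i,j) = p with i x-derivatives and j y-derivatives:
   p = (0,0), p_x = (1,0), p_y = (0,1), p_xy = (1,1), p_yy = (0,2). *)
Definition Bv0 : cdo := [((0,0)%nat, EC 1)].
Definition Bv1 : cdo := [((0,2)%nat, EC 1)].
Definition Bv2 : cdo := [((1,1)%nat, EC 1)].
Definition Bv3 : cdo :=
  [((0,1)%nat, EC 1); ((1,1)%nat, esc 2 EX); ((0,2)%nat, esc 2 EY)].
Definition Bv4 : cdo :=
  [((1,0)%nat, EC 1); ((1,1)%nat, esc 2 EY); ((0,2)%nat, esc (-2) EX)].
Definition Bv5 : cdo :=
  [((0,1)%nat, u_yy); ((1,0)%nat, eneg u_xy);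
   ((0,2)%nat, esc 2 u_y); ((1,1)%nat, esc (-2) u_x)].
Definition Bv6 : cdo :=
  [((1,0)%nat, u_yy); ((0,1)%nat, u_xy);
   ((1,1)%nat, esc 2 u_y); ((0,2)%nat, esc 2 u_x)].

Definition cA := eadd3 u_y (EMul EX u_xy) (EMul EY u_yy).
Definition cB := eadd3 u_x (EMul EY u_xy) (eneg (EMul EX u_yy)).
Definition cC := EAdd (EMul EY u_x) (eneg (EMul EX u_y)).
Definition cG := EAdd (EMul EX u_x) (EMul EY u_y).

Definition Bv7 : cdo :=
  [((1,0)%nat, cA); ((0,1)%nat, cB);
   ((0,2)%nat, esc 2 cC); ((1,1)%nat, esc 2 cG)].
Definition Bv8 : cdo :=
  [((1,0)%nat, eneg cB); ((0,1)%nat, cA);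
   ((0,2)%nat, esc 2 cG); ((1,1)%nat, esc (-2) cC)].

(* The linearization of the Laplace equation is the Laplacian Delta, which is
   formally self-adjoint, so (i) says that Delta (H p) vanishes modulo
   u_xx = - u_yy and p_xx = - p_yy.  In (ii) the test function f only enters
   through its total derivatives, so substituting p_sigma := D_sigma f reduces
   (ii) to the single identity H^* (Delta p) = Delta (H p) modulo
   u_xx = - u_yy, with p now unconstrained.  Both identities are then checked
   by rewriting every u_(i+2, j) (and p_(i+2, j)) as - u_(i, j+2) and
   normalizing the resulting polynomials. *)
From Stdlib Require Import Reals List Lra Setoid Morphisms.
Import ListNotations.
Open Scope R_scope.

Definition Dword (w : list bool) (e : expr) : expr :=
  fold_left (fun e d => Dt d e) w e.

(* Pointwise equality is not preserved by the syntactic [Dt], so expressions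
   are identified only when all their total derivatives agree. *)
Definition teq (a b : expr) : Prop :=
  forall w t, eval t (Dword w a) = eval t (Dword w b).

Infix "=D=" := teq (at level 70).

#[local] Instance teq_Equivalence : Equivalence teq.
Proof.
  split; intros a; unfold teq.
  - reflexivity.
  - intros b Hab w t; symmetry; apply Hab.
  - intros b c Hab Hbc w t; rewrite Hab; apply Hbc.
Qed.

Lemma teq_eval a b t : a =D= b -> eval t a = eval t b.
Proof. intros Hab; exact (Hab [] t). Qed.

Lemma Dword_add w : forall a b, Dword w (EAdd a b) = EAdd (Dword w a) (Dword w b).
Proof. induction w; simpl; auto. Qed.

Lemma Dword_C0 w : Dword w (EC 0) = EC 0.
Proof. induction w; simpl; auto. Qed.

#[local] Instance Dt_teq d : Proper (teq ==> teq) (Dt d).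
Proof. intros a b Hab w t; exact (Hab (d :: w) t). Qed.

#[local] Instance EAdd_teq : Proper (teq ==> teq ==> teq) EAdd.
Proof.
  intros a a' Ha b b' Hb w t; rewrite !Dword_add; cbn [eval]; rewrite Ha, Hb.
  reflexivity.
Qed.

Lemma eval_Dword_mul_teq w : forall a a' b b', a =D= a' -> b =D= b' ->
  forall t, eval t (Dword w (EMul a b)) = eval t (Dword w (EMul a' b')).
Proof.
  induction w as [|d w IHw]; intros a a' b b' Ha Hb t.
  - cbn; rewrite (teq_eval _ _ t Ha), (teq_eval _ _ t Hb); reflexivity.
  - change (eval t (Dword w (EAdd (EMul (Dt d a) b) (EMul a (Dt d b)))) =
            eval t (Dword w (EAdd (EMul (Dt d a') b') (EMul a' (Dt d b'))))).
    rewrite !Dword_add; cbn [eval].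
    rewrite (IHw (Dt d a) (Dt d a') b b'), (IHw a a' (Dt d b) (Dt d b'));
      now try apply Dt_teq.
Qed.

#[local] Instance EMul_teq : Proper (teq ==> teq ==> teq) EMul.
Proof. intros a a' Ha b b' Hb w t; now apply eval_Dword_mul_teq. Qed.

#[local] Instance iter_Dt_teq d n : Proper (teq ==> teq) (Nat.iter n (Dt d)).
Proof. induction n; intros a b Hab; simpl; [exact Hab | now apply Dt_teq, IHn]. Qed.

#[local] Instance Dsig_teq i j : Proper (teq ==> teq) (Dsig i j).
Proof. intros a b Hab; unfold Dsig; now apply iter_Dt_teq, iter_Dt_teq. Qed.

#[local] Instance apply_adj_teq A : Proper (teq ==> teq) (apply_adj A).
Proof.
  intros g g' Hg; induction A as [|[[i j] a] A IH]; [reflexivity|].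
  unfold apply_adj in *; cbn [map esum fold_right]; now rewrite IH, Hg.
Qed.

Lemma Dt_comm e : Dt true (Dt false e) =D= Dt false (Dt true e).
Proof.
  induction e; simpl; try reflexivity.
  - now rewrite IHe1, IHe2.
  - rewrite IHe1, IHe2; intros w t; rewrite !Dword_add; cbn [eval]; ring.
Qed.

Lemma Dsig_S_r i j e : Dsig i (S j) e =D= Dt false (Dsig i j e).
Proof.
  induction i as [|i IHi]; [reflexivity|].
  change (Dt true (Dsig i (S j) e) =D= Dt false (Dt true (Dsig i j e))).
  rewrite IHi; apply Dt_comm.
Qed.

Lemma Dsig_add i j a b : Dsig i j (EAdd a b) = EAdd (Dsig i j a) (Dsig i j b).
Proof.
  unfold Dsig; induction i as [|i IHi]; simpl; [|now rewrite IHi].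
  induction j as [|j IHj]; simpl; [reflexivity | now rewrite IHj].
Qed.

Lemma Dsig_EU i j a b : Dsig i j (EU a b) = EU (i + a) (j + b).
Proof.
  unfold Dsig; induction i as [|i IHi]; simpl; [|now rewrite IHi].
  induction j as [|j IHj]; simpl; [reflexivity | now rewrite IHj].
Qed.

Lemma Dsig_EP i j a b : Dsig i j (EP a b) = EP (i + a) (j + b).
Proof.
  unfold Dsig; induction i as [|i IHi]; simpl; [|now rewrite IHi].
  induction j as [|j IHj]; simpl; [reflexivity | now rewrite IHj].
Qed.

Fixpoint is_const (e : expr) : bool :=
  match e with
  | EC _ => true
  | EAdd a b | EMul a b => is_const a && is_const b
  | _ => false
  end.

Lemma is_const_Dt d k : is_const k = true ->
  is_const (Dt d k) = true /\ forall t, eval t (Dt d k) = 0.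
Proof.
  induction k; simpl; intros Hk; try discriminate; [now split|..];
    apply andb_prop in Hk as [Hk1 Hk2];
    destruct (IHk1 Hk1) as [C1 E1], (IHk2 Hk2) as [C2 E2];
    rewrite ?C1, ?C2, ?Hk1, ?Hk2; (split; [reflexivity | intros t; rewrite E1, E2; ring]).
Qed.

Lemma eval_Dword_mul_const w : forall k g t, is_const k = true ->
  eval t (Dword w (EMul k g)) = eval t k * eval t (Dword w g).
Proof.
  induction w as [|d w IHw]; intros k g t Hk; [reflexivity|].
  change (eval t (Dword w (EAdd (EMul (Dt d k) g) (EMul k (Dt d g)))) =
          eval t k * eval t (Dword w (Dt d g))).
  destruct (is_const_Dt d k Hk) as [Ck Ek].
  rewrite Dword_add; cbn [eval]; rewrite !IHw, Ek by assumption; ring.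
Qed.

Lemma Dt_mul_const d k g : is_const k = true -> Dt d (EMul k g) =D= EMul k (Dt d g).
Proof.
  intros Hk w t.
  change (eval t (Dword (d :: w) (EMul k g)) = eval t (Dword w (EMul k (Dt d g)))).
  now rewrite !eval_Dword_mul_const.
Qed.

Lemma Dsig_mul_const i j k g : is_const k = true ->
  Dsig i j (EMul k g) =D= EMul k (Dsig i j g).
Proof.
  intros Hk.
  assert (Hiter : forall d n g, Nat.iter n (Dt d) (EMul k g) =D= EMul k (Nat.iter n (Dt d) g)).
  { intros d n g'; induction n as [|n IHn]; [reflexivity|].
    simpl; rewrite IHn; now apply Dt_mul_const. }
  unfold Dsig; rewrite Hiter; apply Hiter.
Qed.

Definition Delta (g : expr) : expr := EAdd (Dsig 2 0 g) (Dsig 0 2 g).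

#[local] Instance Delta_teq : Proper (teq ==> teq) Delta.
Proof. intros a b Hab; unfold Delta; now rewrite Hab. Qed.

Definition harmonic (v : nat -> nat -> R) : Prop :=
  forall a b, v (S (S a)) b = - v a (S (S b)).

Lemma lin_laplace : lin laplace =
  [((0,0)%nat, EAdd (EC 0) (EC 0)); ((0,1)%nat, EAdd (EC 0) (EC 0));
   ((0,2)%nat, EAdd (EC 0) (EC 1)); ((1,0)%nat, EAdd (EC 0) (EC 0));
   ((1,1)%nat, EAdd (EC 0) (EC 0)); ((1,2)%nat, EAdd (EC 0) (EC 0));
   ((2,0)%nat, EAdd (EC 1) (EC 0)); ((2,1)%nat, EAdd (EC 0) (EC 0));
   ((2,2)%nat, EAdd (EC 0) (EC 0))].
Proof. reflexivity. Qed.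

Lemma lin_laplace_op g : apply_op (lin laplace) g =D= Delta g.
Proof.
  rewrite lin_laplace; unfold apply_op, Delta; cbn [map esum fold_right fst snd].
  intros w t; rewrite !Dword_add; cbn [eval].
  rewrite !eval_Dword_mul_const, Dword_C0 by reflexivity; cbn [eval]; ring.
Qed.

Lemma lin_laplace_adj g : apply_adj (lin laplace) g =D= Delta g.
Proof.
  rewrite lin_laplace; unfold apply_adj, Delta; cbn [map esum fold_right].
  rewrite !Dsig_mul_const by reflexivity.
  intros w t; rewrite !Dword_add; cbn [eval].
  rewrite !eval_Dword_mul_const, Dword_C0 by reflexivity; cbn [eval Nat.add]; ring.
Qed.

Lemma on_E_laplace t : on_E laplace t -> harmonic (ju t).
Proof.
  intros HE a b; specialize (HE a b); unfold laplace in HE.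
  rewrite Dsig_add, !Dsig_EU in HE; cbn [eval] in HE.
  rewrite !Nat.add_0_r, !Nat.add_comm with (m := 2%nat) in HE; cbn in HE; lra.
Qed.

Lemma on_TE_laplace t : on_TE laplace t -> harmonic (jp t).
Proof.
  intros [_ HT] a b; specialize (HT a b).
  rewrite (teq_eval _ _ t (Dsig_teq a b _ _ (lin_laplace_op (EP 0 0)))) in HT.
  unfold Delta in HT; rewrite Dsig_add, !Dsig_EP in HT; unfold Dsig in HT.
  cbn [eval Nat.iter Dt] in HT.
  rewrite !Nat.add_0_r, !Nat.add_comm with (m := 2%nat) in HT; cbn in HT; lra.
Qed.

Section SubstP.

Variable f : expr.

Fixpoint subst_p (e : expr) : expr :=
  match e with
  | EP i j => Dsig i j f
  | EAdd a b => EAdd (subst_p a) (subst_p b)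
  | EMul a b => EMul (subst_p a) (subst_p b)
  | _ => e
  end.

Definition set_p (t : jetpt) (q : nat -> nat -> R) : jetpt := Jet (jx t) (jy t) (ju t) q.

Lemma eval_subst_p t e :
  eval t (subst_p e) = eval (set_p t (fun i j => eval t (Dsig i j f))) e.
Proof. induction e; simpl; congruence. Qed.

Lemma subst_p_id a : p_free a -> subst_p a = a.
Proof. induction a; simpl; intuition congruence. Qed.

Lemma subst_p_Dt d e : subst_p (Dt d e) =D= Dt d (subst_p e).
Proof.
  induction e; simpl; try (destruct d; reflexivity).
  - destruct d; [reflexivity | apply Dsig_S_r].
  - now rewrite IHe1, IHe2.
  - now rewrite IHe1, IHe2.
Qed.

Lemma subst_p_Dsig i j e : subst_p (Dsig i j e) =D= Dsig i j (subst_p e).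
Proof.
  assert (Hiter : forall d n e, subst_p (Nat.iter n (Dt d) e) =D= Nat.iter n (Dt d) (subst_p e)).
  { intros d n e'; induction n as [|n IHn]; [reflexivity|].
    simpl; now rewrite subst_p_Dt, IHn. }
  unfold Dsig; now rewrite Hiter, Hiter.
Qed.

Lemma subst_p_Delta e : subst_p (Delta e) =D= Delta (subst_p e).
Proof. unfold Delta; cbn [subst_p]; now rewrite !subst_p_Dsig. Qed.

Lemma subst_p_apply_op (H : cdo) g : Forall (fun c => p_free (snd c)) H ->
  subst_p (apply_op H g) =D= apply_op H (subst_p g).
Proof.
  induction 1 as [|[[i j] a] A Ha _ IH]; [reflexivity|].
  unfold apply_op in *; cbn [map esum fold_right subst_p fst snd] in *.
  now rewrite subst_p_Dsig, IH, (subst_p_id a Ha).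
Qed.

Lemma subst_p_apply_adj (H : cdo) g : Forall (fun c => p_free (snd c)) H ->
  subst_p (apply_adj H g) =D= apply_adj H (subst_p g).
Proof.
  induction 1 as [|[[i j] a] A Ha _ IH]; [reflexivity|].
  unfold apply_adj in *; cbn [map esum fold_right subst_p] in *.
  now rewrite subst_p_Dsig, IH; cbn [subst_p]; rewrite (subst_p_id a Ha).
Qed.

End SubstP.

Lemma laplace_bivector_criterion (H : cdo) :
  Forall (fun c => p_free (snd c)) H ->
  (forall t, harmonic (ju t) -> harmonic (jp t) -> eval t (Delta (Hu H)) = 0) ->
  (forall t, harmonic (ju t) ->
     eval t (apply_adj H (Delta (EP 0 0))) = eval t (Delta (Hu H))) ->
  variational_bivector laplace H.
Proof.
  intros Hfree Hi Hii; split.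
  - intros t HT; rewrite (teq_eval _ _ t (lin_laplace_op _)).
    apply Hi; [apply on_E_laplace, HT | now apply on_TE_laplace].
  - intros f _ t HE.
    assert (Hadj : apply_adj H (apply_adj (lin laplace) f)
                   =D= subst_p f (apply_adj H (Delta (EP 0 0)))).
    { now rewrite lin_laplace_adj, (subst_p_apply_adj f _ _ Hfree), subst_p_Delta. }
    assert (Hop : apply_op (lin laplace) (apply_op H f) =D= subst_p f (Delta (Hu H))).
    { rewrite lin_laplace_op, subst_p_Delta; unfold Hu.
      now rewrite (subst_p_apply_op f _ _ Hfree). }
    rewrite (teq_eval _ _ t Hadj), (teq_eval _ _ t Hop), !eval_subst_p.
    apply Hii, (on_E_laplace t HE).
Qed.

Ltac laplace_identity :=
  intros ? ?; try intro;
  unfold Delta, Hu, apply_adj, apply_op, Dsig; simpl;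
  repeat match goal with h : harmonic _ |- _ => rewrite h end;
  ring.

Theorem mainTheorem3 :
  forall B, In B [Bv0; Bv1; Bv2; Bv3; Bv4; Bv5; Bv6; Bv7; Bv8] ->
    variational_bivector laplace B.
Proof.
  intros B HB; simpl in HB.
  repeat destruct HB as [<- | HB]; try contradiction.
  all: apply laplace_bivector_criterion;
    [repeat constructor | laplace_identity | laplace_identity].
Qed.
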